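(* Let $\mathfrak R=(\mathcal B,\mathcal S,\pi)$ be a return risk measurement regime such that $\mathcal S$ is a cone and $\pi$ is positively homogeneous, and let $\mathcal S_1=\{Z\in\mathcal S:\pi(Z)=1\}$. Then for all $X\in\mathcal C$, $$\eta_{\mathfrak R}(X)=\inf\{\lambda>0: X/\lambda\in\mathcal B\cdot\mathcal S_1\}.$$ Moreover, $\mathcal B\cdot\mathcal S_1$ is monotone in the sense that for all $X\in\mathcal B\cdot\mathcal S_1$ and all $Y\in\mathcal C$ with $Y\le X$ a.s., we have $Y\in\mathcal B\cdot\mathcal S_1$.
   Context: Let $(\Omega,\mathcal F,P)$ be a probability space, $L^0$ the space of real random variables with the a.s. order, $L^0_{++}=\{X\in L^0:X>0\text{ a.s.}\}$. For $\mathcal A,\mathcal D\subset L^0_{++}$ write $\mathcal A\cdot\mathcal D=\{AD:A\in\mathcal A,D\in\mathcal D\}$ and $\frac{\mathcal A}{\mathcal D}=\{AD^{-1}:A\in\mathcal A,D\in\mathcal D\}$. Setting: nonempty sets $\mathcal C,\mathcal S,\mathcal K\subset L^0_{++}$ (model set, security set, set of relative losses) with $\frac{\mathcal C}{\mathcal S}\subset\mathcal K$; a pricing map $\pi\colon\mathcal S\to(0,\infty)$; a relative acceptance set $\mathcal B$, i.e. a nonempty proper subset of $\mathcal K$ such that $X\in\mathcal B$, $Y\in\mathcal K$, $Y\le X$ imply $Y\in\mathcal B$. $\mathfrak R=(\mathcal B,\mathcal S,\pi)$ is a return risk measurement regime, and $\eta_{\mathfrak R}(X)=\inf\{\pi(Z):Z\in\mathcal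 S,\ X/Z\in\mathcal B\}$, $X\in\mathcal C$ ($\inf\emptyset=\infty$), is the MARRM. A set $\mathcal A$ is a cone if $\lambda\mathcal A\subset\mathcal A$ for all $\lambda>0$; $\pi$ is positively homogeneous if $\pi(\lambda Z)=\lambda\pi(Z)$ for $\lambda>0$, $Z\in\mathcal S$. *)

From HB Require Import structures.
From mathcomp Require Import all_boot all_order all_algebra.
From mathcomp Require Import all_classical all_reals all_analysis.
Set Implicit Arguments. Unset Strict Implicit. Unset Printing Implicit Defensive.
Import Order.TTheory GRing.Theory Num.Theory.
Local Open Scope classical_set_scope.
Local Open Scope ring_scope.

(* Random variables are represented by functions Omega -> R; an element of
   L^0_{++} is represented by a measurable representative that is strictly
   positive everywhere (every class in L^0_{++} has such a representative). *)

Definition L0pp d (Omega : measurableType d) (R : realType) : set (Omega -> R) :=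
  [set X : Omega -> R | measurable_fun setT X /\ forall w, 0 < X w].

Definition ale d (Omega : measurableType d) (R : realType)
  (P : probability Omega R) (Y X : Omega -> R) : Prop :=
  {ae P, forall w, Y w <= X w}.

Definition setmul (Omega : Type) (R : realType) (A D : set (Omega -> R)) :
  set (Omega -> R) :=
  [set X | exists2 a, A a & exists2 b, D b & X = (fun w => a w * b w)].

Definition setdiv (Omega : Type) (R : realType) (A D : set (Omega -> R)) :
  set (Omega -> R) :=
  [set X | exists2 a, A a & exists2 b, D b & X = (fun w => a w / b w)].

Definition relative_acceptance_set d (Omega : measurableType d) (R : realType)
  (P : probability Omega R) (K B : set (Omega -> R)) : Prop :=
  B !=set0 /\ B `<=` K /\ B != K /\
  (forall X Y, B X -> K Y -> ale P Y X -> B Y).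

Definition is_cone (Omega : Type) (R : realType) (A : set (Omega -> R)) : Prop :=
  forall (l : R) Z, 0 < l -> A Z -> A (fun w => l * Z w).

Definition pos_homogeneous (Omega : Type) (R : realType)
  (S : set (Omega -> R)) (pi : (Omega -> R) -> R) : Prop :=
  forall (l : R) Z, 0 < l -> S Z -> pi (fun w => l * Z w) = l * pi Z.

(* the MARRM eta_R(X) = inf {pi(Z) : Z in S, X/Z in B}, inf of empty = +oo *)
Definition marrm (Omega : Type) (R : realType) (B S : set (Omega -> R))
  (pi : (Omega -> R) -> R) (X : Omega -> R) : \bar R :=
  ereal_inf [set (pi Z)%:E | Z in [set Z | S Z /\ B (fun w => X w / Z w)]].

Definition unit_price (Omega : Type) (R : realType) (S : set (Omega -> R))
  (pi : (Omega -> R) -> R) : set (Omega -> R) :=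
  [set Z | S Z /\ pi Z = 1].

From HB Require Import structures.
From mathcomp Require Import all_boot all_order all_algebra.
From mathcomp Require Import all_classical all_reals all_analysis.
From mathcomp Require Import ring.
Set Implicit Arguments. Unset Strict Implicit. Unset Printing Implicit Defensive.
Import Order.TTheory GRing.Theory Num.Theory.
Local Open Scope classical_set_scope.
Local Open Scope ring_scope.

(* Since [S] is a cone and [pi] is positively homogeneous, every [Z] in [S]
   factors as [pi Z * Z'] with [pi Z' = 1]; hence [X / Z] lies in [B] exactly
   when [X / pi Z] lies in [B . S_1], so the two infima range over the same set
   of prices.  Monotonicity of [B . S_1] is inherited from that of [B], since
   [Y / Z] lies in [K] for [Y] in [C] and [Z] in [S]. *)

Section UnitPrice.
Variables (Omega : Type) (R : realType).
Variables (S : set (Omega -> R)) (pi : (Omega -> R) -> R).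
Hypothesis S_pos : forall {Z} w, S Z -> 0 < Z w.
Hypothesis pi_pos : forall {Z}, S Z -> 0 < pi Z.
Hypothesis S_cone : is_cone S.
Hypothesis pi_hom : pos_homogeneous S pi.

Lemma unit_price_normalize Z :
  S Z -> unit_price S pi (fun w => (pi Z)^-1 * Z w).
Proof.
move=> SZ; have piZ_gt0 := pi_pos SZ.
split; first by apply: S_cone; rewrite ?invr_gt0.
by rewrite pi_hom ?invr_gt0 // mulVf // lt0r_neq0.
Qed.

Lemma unit_price_scale {l Z} :
  0 < l -> unit_price S pi Z -> S (fun w => l * Z w) /\ pi (fun w => l * Z w) = l.
Proof. by move=> l_gt0 [SZ piZ]; rewrite pi_hom // piZ mulr1; split => //; exact: S_cone. Qed.

Lemma prices_of_acceptable_securities (B : set (Omega -> R)) (X : Omega -> R) :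
  [set pi Z | Z in [set Z | S Z /\ B (fun w => X w / Z w)]] =
  [set l | 0 < l /\ setmul B (unit_price S pi) (fun w => X w / l)].
Proof.
apply/seteqP; split => [_ [Z [SZ BXZ] <-]|l [l_gt0 [b Bb [U S1U XZ_eq]]]].
- split; first exact: pi_pos.
  exists (fun w => X w / Z w) => //.
  exists (fun w => (pi Z)^-1 * Z w); first exact: unit_price_normalize.
  apply/funext => w; have := S_pos w SZ; have := pi_pos SZ => piZ_gt0 Zw_gt0.
  by field; rewrite !lt0r_neq0.
- have [SlU piLU] := unit_price_scale l_gt0 S1U.
  exists (fun w => l * U w) => //; split => //.
  suff -> : (fun w => X w / (l * U w)) = b by [].
  apply/funext => w; have := S_pos w S1U.1 => Uw_gt0.
  have /= := congr1 (fun f => f w) XZ_eq => XZw.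
  rewrite -[X w](divfK (lt0r_neq0 l_gt0)) XZw.
  by field; rewrite !lt0r_neq0.
Qed.

End UnitPrice.

Lemma setmul_monotone d (Omega : measurableType d) (R : realType)
    (P : probability Omega R) (C K B D : set (Omega -> R)) :
  (forall Z w, D Z -> 0 < Z w) -> setdiv C D `<=` K ->
  (forall X Y, B X -> K Y -> ale P Y X -> B Y) ->
  forall X Y, setmul B D X -> C Y -> ale P Y X -> setmul B D Y.
Proof.
move=> D_pos CDK B_mono _ Y [b Bb [z Dz ->]] CY YX.
have z_gt0 w := D_pos z w Dz.
exists (fun w => Y w / z w); last first.
  by exists z => //; apply/funext => w; rewrite divfK // lt0r_neq0.
apply: (B_mono b) => //; first by apply: CDK; exists Y => //; exists z.
by apply: filterS YX => w /=; rewrite ler_pdivrMr.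
Qed.

Theorem mainTheorem2 (d : measure_display) (Omega : measurableType d)
  (R : realType) (P : probability Omega R)
  (C S K B : set (Omega -> R)) (pi : (Omega -> R) -> R) :
  C !=set0 -> S !=set0 -> K !=set0 ->
  C `<=` @L0pp _ Omega R -> S `<=` @L0pp _ Omega R -> K `<=` @L0pp _ Omega R ->
  setdiv C S `<=` K ->
  (forall Z, S Z -> 0 < pi Z) ->
  relative_acceptance_set P K B ->
  is_cone S -> pos_homogeneous S pi ->
  (forall X, C X ->
     marrm B S pi X =
     ereal_inf [set l%:E | l in [set l : R | 0 < l /\
                  setmul B (unit_price S pi) (fun w => X w / l)]]) /\
  (forall X Y, setmul B (unit_price S pi) X -> C Y -> ale P Y X ->
     setmul B (unit_price S pi) Y).
Proof.
move=> _ _ _ _ SL _ CSK pi_pos [_ [_ [_ B_mono]]] S_cone pi_hom.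
have S_pos Z w : S Z -> 0 < Z w by move=> /SL[_ ->].
split=> [X _|].
  have prices := prices_of_acceptable_securities S_pos pi_pos S_cone pi_hom B X.
  by rewrite /marrm -prices image_comp.
apply: setmul_monotone B_mono => [Z w [SZ _]|_ [Y CY [Z [SZ _] ->]]].
  exact: S_pos.
by apply: CSK; exists Y => //; exists Z.
Qed.
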